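(* Let $A=(A_1,A_2,A_3)\in V_3$ satisfy $\sigma_{12}(A)=\sigma_{13}(A)=\sigma_{23}(A)=0$ and suppose $A$ is not similar to an upper triangular $3$-matrix. Then $A$ is similar to a triple of the form $A_1'=\begin{pmatrix}a_1&0\\0&d_1\end{pmatrix}$, $A_2'=\begin{pmatrix}a_2&b_2\\0&d_2\end{pmatrix}$, $A_3'=\begin{pmatrix}a_3&0\\c_3&d_3\end{pmatrix}$ with $e_2e_3+b_2c_3=0$ and $e_1b_2c_3\neq 0$, where $e_j=a_j-d_j$.
   Context: $V_3=(M_{2\times2}(\mathbb{C}))^{\times 3}$ with $GL(2,\mathbb{C})$ acting by simultaneous conjugation; two elements are similar if they lie in the same orbit. A $3$-matrix is upper triangular if all components are upper triangular. With $t_j=\mathsf{tr}(A_j)$, $t_{jk}=\mathsf{tr}(A_jA_k)$, define $\tau_{jk}=t_{jk}-\tfrac12t_jt_k$ and $\sigma_{jk}=\tau_{jk}^2-\tau_{jj}\tau_{kk}$. *)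

From HB Require Import structures.
From mathcomp Require Import all_boot all_order all_algebra.
From mathcomp Require Import reals.
From mathcomp Require Import complex.
Set Implicit Arguments. Unset Strict Implicit. Unset Printing Implicit Defensive.
Import Order.TTheory GRing.Theory Num.Theory.
Local Open Scope ring_scope.
Local Open Scope complex_scope.

Section Defs.
Variable R : realType.
Notation C := (R[i]).

(* A 3-matrix: an element of V_3 = (M_2(C))^3, indexed by 'I_3 (j = 0,1,2
   corresponds to the paper's indices 1,2,3). *)
Definition i1 : 'I_3 := @Ordinal 3 0 isT.
Definition i2 : 'I_3 := @Ordinal 3 1 isT.
Definition i3 : 'I_3 := @Ordinal 3 2 isT.

Definition V3 := 'I_3 -> 'M[C]_2.

Definition similar3 (A B : V3) : Prop :=
  exists P : 'M[C]_2, P \in unitmx /\ forall j, B j = invmx P *m A j *m P.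

(* upper triangular 2x2 matrix: entries below the diagonal vanish
   (mathcomp's is_trig_mx is lower triangularity, hence the transpose) *)
Definition upper_tri (M : 'M[C]_2) : bool := is_trig_mx M^T.
Definition upper_tri3 (A : V3) : Prop := forall j, upper_tri (A j).

Definition tr1 (A : V3) j : C := \tr (A j).
Definition tr2 (A : V3) j k : C := \tr (A j *m A k).
Definition tau (A : V3) j k : C := tr2 A j k - 2^-1 * tr1 A j * tr1 A k.
Definition sigma (A : V3) j k : C := tau A j k ^+ 2 - tau A j j * tau A k k.

Definition mx2 (a b c d : C) : 'M[C]_2 :=
  \matrix_(i < 2, j < 2)
    (if (i == 0 :> nat) then (if (j == 0 :> nat) then a else b)
     else (if (j == 0 :> nat) then c else d)).

Definition triple (M1 M2 M3 : 'M[C]_2) : V3 :=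
  fun j => if (j == 0 :> nat) then M1 else if (j == 1 :> nat) then M2 else M3.
End Defs.

From HB Require Import structures.
From mathcomp Require Import all_boot all_order all_algebra.
From mathcomp Require Import reals.
From mathcomp Require Import complex.
From mathcomp Require Import ring.
Set Implicit Arguments. Unset Strict Implicit. Unset Printing Implicit Defensive.
Import Order.TTheory GRing.Theory Num.Theory.
Local Open Scope ring_scope.
Local Open Scope complex_scope.

(* Sigma is invariant under simultaneous conjugation, and in a basis where
   A_1 = diag(a, d) one has sigma(A_1, N) = -(a - d)^2 N_12 N_21, while for a
   Jordan block A_1 = [[a, b], [0, a]] one has sigma(A_1, N) = (b N_21)^2.
   So put A_1 in Jordan form.  If it is a nontrivial Jordan block, A_2 and A_3
   are already upper triangular; if it is scalar, the same argument applied to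
   A_2 and A_3 triangularizes them.  Otherwise each of A_2, A_3 is upper or
   lower triangular; as A is not triangularizable, after possibly swapping the
   basis vectors A_2 is strictly upper and A_3 strictly lower triangular, and
   sigma_23 = b_2 c_3 (e_2 e_3 + b_2 c_3) gives the relation. *)

Lemma sum_ord2 (V : nmodType) (F : 'I_2 -> V) : \sum_(i < 2) F i = F 0 + F 1.
Proof. by rewrite big_ord_recl big_ord1; congr (F _ + F _); apply/val_inj. Qed.

Lemma quadratic_root (F : closedFieldType) (u v : F) :
  exists l : F, l ^+ 2 + u * l + v = 0.
Proof.
have [l] := @solve_monicpoly F 2 (fun i => if i is 0 then - v else - u) isT.
by rewrite sum_ord2 /= expr0 expr1 mulr1 => root_l; exists l; rewrite root_l; ring.
Qed.

Section Mx2.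
Variable R : realType.
Local Notation C := (R[i]).
Implicit Types (a b c d p q r s : C) (M N P Q : 'M[C]_2).

Lemma mx2E M : M = mx2 (M 0 0) (M 0 1) (M 1 0) (M 1 1).
Proof.
apply/matrixP => i j; rewrite !mxE.
by case: i => [[|[|]]] //= ?; case: j => [[|[|]]] //= ?; congr (M _ _); apply/val_inj.
Qed.

Lemma mx2_mul a b c d p q r s :
  mx2 a b c d *m mx2 p q r s =
  mx2 (a * p + b * r) (a * q + b * s) (c * p + d * r) (c * q + d * s).
Proof.
apply/matrixP => i j; rewrite !mxE sum_ord2 !mxE.
by case: i => [[|[|]]] //= ?; case: j => [[|[|]]] //= ?.
Qed.

Lemma mxtrace_mx2 a b c d : \tr (mx2 a b c d) = a + d.
Proof. by rewrite /mxtrace sum_ord2 !mxE. Qed.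

Lemma det_mx2 a b c d : \det (mx2 a b c d) = a * d - b * c.
Proof.
by rewrite (expand_det_row _ 0) sum_ord2 /cofactor !mxE /= !det_mx11 !mxE /=
  expr0 expr1 mul1r mulN1r mulrN.
Qed.

Lemma unitmx_mx2 a b c d : a * d - b * c != 0 -> mx2 a b c d \in unitmx.
Proof. by rewrite unitmxE det_mx2 unitfE. Qed.

Lemma mx2_scalar a : mx2 a 0 0 a = a%:M.
Proof. by rewrite [RHS]mx2E !mxE /= mulr1n mulr0n. Qed.

Lemma trmx_mx2 a b c d : (mx2 a b c d)^T = mx2 a c b d.
Proof. by rewrite [LHS]mx2E !mxE. Qed.

Lemma is_trig_mx2 a b c d : is_trig_mx (mx2 a b c d) = (b == 0).
Proof.
apply/is_trig_mxP/eqP => [trig | ->]; first by rewrite -(trig 0 1) ?mxE.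
by move=> [[|[|]]] //= ? [[|[|]]] //= ? _; rewrite mxE.
Qed.

Lemma upper_tri_mx2 a b c d : upper_tri (mx2 a b c d) = (c == 0).
Proof. by rewrite /upper_tri trmx_mx2 is_trig_mx2. Qed.

Lemma upper_triE M : upper_tri M = (M 1 0 == 0).
Proof. by rewrite {1}[M]mx2E upper_tri_mx2. Qed.

Lemma is_trig_mxE M : is_trig_mx M = (M 0 1 == 0).
Proof. by rewrite {1}[M]mx2E is_trig_mx2. Qed.

Definition mxconj P M := invmx P *m M *m P.

Lemma mulmx_mxconj P M : P \in unitmx -> P *m mxconj P M = M *m P.
Proof. by move=> uP; rewrite /mxconj !mulmxA mulmxV ?mul1mx. Qed.

Lemma mxconj_eqP P M N : P \in unitmx -> mxconj P M = N <-> M *m P = P *m N.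
Proof.
move=> uP; split => [<- | MP]; first by rewrite mulmx_mxconj.
by rewrite /mxconj -mulmxA MP mulKmx.
Qed.

Lemma mxconjM P Q M : P \in unitmx -> Q \in unitmx ->
  mxconj (P *m Q) M = mxconj Q (mxconj P M).
Proof.
move=> uP uQ; apply/mxconj_eqP; first by rewrite unitmx_mul uP uQ.
by rewrite mulmxA -(mulmx_mxconj _ uP) -mulmxA -(mulmx_mxconj _ uQ) mulmxA.
Qed.

Lemma mxconj_scalar P a : P \in unitmx -> mxconj P a%:M = a%:M.
Proof. by move=> uP; apply/mxconj_eqP; rewrite // scalar_mxC. Qed.

Lemma mxtrace_mxconj P M : P \in unitmx -> \tr (mxconj P M) = \tr M.
Proof. by move=> uP; rewrite /mxconj mxtrace_mulC mulmxA mulmxV ?mul1mx. Qed.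

Lemma mxconj_mul P M N : P \in unitmx ->
  mxconj P M *m mxconj P N = mxconj P (M *m N).
Proof. by move=> uP; rewrite /mxconj !mulmxA mulmxK. Qed.

Definition tauM M N : C := \tr (M *m N) - 2^-1 * \tr M * \tr N.
Definition sigmaM M N : C := tauM M N ^+ 2 - tauM M M * tauM N N.

Lemma sigmaM_mxconj P M N : P \in unitmx ->
  sigmaM (mxconj P M) (mxconj P N) = sigmaM M N.
Proof.
move=> uP; have tauP X Y : tauM (mxconj P X) (mxconj P Y) = tauM X Y.
  by congr (_ - _ * _ * _); rewrite ?(mxconj_mul _ _ uP) (mxtrace_mxconj _ uP).
by congr (_ ^+ 2 - _ * _); apply: tauP.
Qed.

Lemma sigmaM_diag a d p q r s :
  sigmaM (mx2 a 0 0 d) (mx2 p q r s) = - (a - d) ^+ 2 * q * r.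
Proof. by rewrite /sigmaM /tauM !mx2_mul !mxtrace_mx2; field. Qed.

Lemma sigmaM_jordan a b p q r s :
  sigmaM (mx2 a b 0 a) (mx2 p q r s) = (b * r) ^+ 2.
Proof. by rewrite /sigmaM /tauM !mx2_mul !mxtrace_mx2; field. Qed.

Lemma sigmaM_upper_lower a2 b2 d2 a3 c3 d3 :
  sigmaM (mx2 a2 b2 0 d2) (mx2 a3 0 c3 d3) =
  b2 * c3 * ((a2 - d2) * (a3 - d3) + b2 * c3).
Proof. by rewrite /sigmaM /tauM !mx2_mul !mxtrace_mx2; field. Qed.

Lemma sigmaM_diag_eq0 a d N : a != d -> sigmaM (mx2 a 0 0 d) N = 0 ->
  upper_tri N || is_trig_mx N.
Proof.
move=> ad; rewrite [N]mx2E sigmaM_diag upper_tri_mx2 is_trig_mx2 => /eqP.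
by rewrite -mulrA mulf_eq0 oppr_eq0 expf_eq0 subr_eq0 (negbTE ad) andbF /= mulf_eq0 orbC.
Qed.

Lemma sigmaM_jordan_eq0 a b N : b != 0 -> sigmaM (mx2 a b 0 a) N = 0 ->
  upper_tri N.
Proof.
move=> b0; rewrite [N]mx2E sigmaM_jordan upper_tri_mx2 => /eqP.
by rewrite expf_eq0 /= mulf_eq0 (negbTE b0).
Qed.

Lemma mxconj_upper_tri M : exists2 P, P \in unitmx & upper_tri (mxconj P M).
Proof.
rewrite [M]mx2E; move: (M 0 0) (M 0 1) (M 1 0) (M 1 1) => a b c d.
have [-> | c0] := eqVneq c 0.
  by exists 1%:M; rewrite ?unitmx1 // /mxconj invmx1 mul1mx mulmx1 upper_tri_mx2.
have [l root_l] := quadratic_root (- (a + d)) (a * d - b * c).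
have uP : mx2 (l - d) 1 c 0 \in unitmx.
  by rewrite unitmx_mx2 // mulr0 mul1r sub0r oppr_eq0.
(* the first column [l - d; c] is an eigenvector for the eigenvalue l *)
exists (mx2 (l - d) 1 c 0) => //.
suff -> : mxconj (mx2 (l - d) 1 c 0) (mx2 a b c d) = mx2 l 1 0 (a + d - l).
  by rewrite upper_tri_mx2.
apply/mxconj_eqP; rewrite // !mx2_mul; congr mx2; try ring.
rewrite mulr0 addr0; apply/eqP; rewrite -subr_eq0 -oppr_eq0 -root_l; apply/eqP; ring.
Qed.

Variant mx2_normal_form M : Prop :=
  | Mx2Diag P a d of P \in unitmx & a != d & mxconj P M = mx2 a 0 0 d
  | Mx2Jordan P a b of P \in unitmx & mxconj P M = mx2 a b 0 a.

Lemma mx2_normalP M : mx2_normal_form M.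
Proof.
have [P uP] := mxconj_upper_tri M; rewrite upper_triE => /eqP lower0.
have eT := mx2E (mxconj P M); rewrite lower0 in eT.
move: (mxconj P M 0 0) (mxconj P M 0 1) (mxconj P M 1 1) eT => a b d eT.
have [ad | ad] := eqVneq a d; first by rewrite ad in eT; exact: Mx2Jordan uP eT.
have uQ : mx2 1 b 0 (d - a) \in unitmx.
  by rewrite unitmx_mx2 // mul1r mulr0 subr0 subr_eq0 eq_sym.
apply: (@Mx2Diag M (P *m mx2 1 b 0 (d - a)) a d) ad _.
  by rewrite unitmx_mul uP.
rewrite mxconjM // eT; apply/mxconj_eqP; rewrite // !mx2_mul; congr mx2; ring.
Qed.

Definition swap_mx : 'M[C]_2 := mx2 0 1 1 0.

Lemma unitmx_swap : swap_mx \in unitmx.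
Proof. by rewrite unitmx_mx2 // mulr0 mul1r sub0r oppr_eq0 oner_eq0. Qed.

Lemma mxconj_swap a b c d : mxconj swap_mx (mx2 a b c d) = mx2 d c b a.
Proof.
by apply/mxconj_eqP; rewrite ?unitmx_swap // !mx2_mul; congr mx2; ring.
Qed.

Lemma upper_tri_swap M : upper_tri (mxconj swap_mx M) = is_trig_mx M.
Proof. by rewrite [M]mx2E mxconj_swap upper_tri_mx2 is_trig_mx2. Qed.

Lemma is_trig_swap M : is_trig_mx (mxconj swap_mx M) = upper_tri M.
Proof. by rewrite [M]mx2E mxconj_swap upper_tri_mx2 is_trig_mx2. Qed.

Lemma sigmaM_eq0_cotriangular M N : sigmaM M N = 0 ->
  exists2 P, P \in unitmx & upper_tri (mxconj P M) && upper_tri (mxconj P N).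
Proof.
have sigmaP P : P \in unitmx -> sigmaM M N = sigmaM (mxconj P M) (mxconj P N).
  by move=> uP; rewrite sigmaM_mxconj.
case: (mx2_normalP M) => [P a d uP ad eM | P a b uP eM]; rewrite (sigmaP P uP) eM.
  case/(sigmaM_diag_eq0 ad)/orP => [uN | lN].
    by exists P; rewrite // eM upper_tri_mx2 eqxx.
  exists (P *m swap_mx); first by rewrite unitmx_mul uP unitmx_swap.
  rewrite !(mxconjM _ uP unitmx_swap); apply/andP; split; rewrite upper_tri_swap.
    by rewrite eM is_trig_mx2 eqxx.
  exact: lN.
have [b0 _ | b_neq0 /(sigmaM_jordan_eq0 b_neq0) uN] := eqVneq b 0; last first.
  by exists P; rewrite // eM upper_tri_mx2 eqxx.
have [Q uQ uN] := mxconj_upper_tri (mxconj P N).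
exists (P *m Q); first by rewrite unitmx_mul uP.
by rewrite !(mxconjM _ uP uQ) eM b0 mx2_scalar mxconj_scalar // -mx2_scalar upper_tri_mx2 eqxx.
Qed.

End Mx2.

Arguments swap_mx {R}.
Arguments unitmx_swap {R}.

Section Triples.
Variable R : realType.
Local Notation C := (R[i]).
Implicit Types (a b d : C) (P : 'M[C]_2) (A B : V3 R).

Lemma sigmaE A j k : sigma A j k = sigmaM (A j) (A k).
Proof. by []. Qed.

Lemma forall_ord3 (Pr : 'I_3 -> Prop) : Pr i1 -> Pr i2 -> Pr i3 -> forall j, Pr j.
Proof.
move=> P1 P2 P3 [[|[|[|m]]] lt_m3] //.
- by rewrite (_ : Ordinal lt_m3 = i1) //; apply/val_inj.
- by rewrite (_ : Ordinal lt_m3 = i2) //; apply/val_inj.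
- by rewrite (_ : Ordinal lt_m3 = i3) //; apply/val_inj.
Qed.

Definition conj3 P A : V3 R := fun j => mxconj P (A j).

Lemma similar3_conj3 P A : P \in unitmx -> similar3 A (conj3 P A).
Proof. by exists P. Qed.

Lemma similar3_refl A : similar3 A A.
Proof. by exists 1%:M; rewrite unitmx1 invmx1; split=> // j; rewrite mul1mx mulmx1. Qed.

Lemma similar3_trans A B D : similar3 A B -> similar3 B D -> similar3 A D.
Proof.
move=> [P [uP eB]] [Q [uQ eD]]; exists (P *m Q); split.
  by rewrite unitmx_mul uP.
by move=> j; rewrite eD eB -[RHS]/(mxconj _ _) mxconjM.
Qed.

Lemma sigma_similar3 A B : similar3 A B -> forall j k, sigma B j k = sigma A j k.
Proof. by move=> [P [uP eB]] j k; rewrite !sigmaE !eB sigmaM_mxconj. Qed.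

Definition triangularizable3 A := exists B, similar3 A B /\ upper_tri3 B.

Lemma triangularizable3_similar A B :
  similar3 A B -> triangularizable3 B -> triangularizable3 A.
Proof. by move=> sAB [D [sBD uD]]; exists D; split; first exact: similar3_trans sBD. Qed.

Lemma triangularizable3_conj P A : P \in unitmx ->
  (forall j, upper_tri (mxconj P (A j))) -> triangularizable3 A.
Proof. by move=> uP uA; exists (conj3 P A); split; first exact: similar3_conj3. Qed.

Lemma triangularizable3_upper A : upper_tri3 A -> triangularizable3 A.
Proof. by move=> uA; exists A; split; first exact: similar3_refl. Qed.

Lemma triangularizable3_lower A :
  (forall j, is_trig_mx (A j)) -> triangularizable3 A.
Proof.
by move=> lA; apply: (triangularizable3_conj unitmx_swap) => j; rewrite upper_tri_swap.
Qed.

Definition diag_upper_lower_form A := exists a1 d1 a2 b2 d2 a3 c3 d3 : C,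
  similar3 A (triple (mx2 a1 0 0 d1) (mx2 a2 b2 0 d2) (mx2 a3 0 c3 d3)) /\
  (a2 - d2) * (a3 - d3) + b2 * c3 = 0 /\
  (a1 - d1) * b2 * c3 != 0.

Lemma diag_upper_lower_form_similar A B :
  similar3 A B -> diag_upper_lower_form B -> diag_upper_lower_form A.
Proof.
move=> sAB [a1 [d1 [a2 [b2 [d2 [a3 [c3 [d3 [sBT eqs]]]]]]]]].
by exists a1, d1, a2, b2, d2, a3, c3, d3; split; first exact: similar3_trans sBT.
Qed.

Lemma diag_upper_lower_form_upper_lower A a d :
  A i1 = mx2 a 0 0 d -> a != d -> upper_tri (A i2) -> is_trig_mx (A i3) ->
  sigma A i2 i3 = 0 -> ~ triangularizable3 A -> diag_upper_lower_form A.
Proof.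
move=> A1 ad; rewrite upper_triE is_trig_mxE => /eqP A2_10 /eqP A3_01 s23 ntri.
set a2 := A i2 0 0; set b2 := A i2 0 1; set d2 := A i2 1 1.
set a3 := A i3 0 0; set c3 := A i3 1 0; set d3 := A i3 1 1.
have A2 : A i2 = mx2 a2 b2 0 d2 by rewrite -A2_10 -mx2E.
have A3 : A i3 = mx2 a3 0 c3 d3 by rewrite -A3_01 -mx2E.
have c3_neq0 : c3 != 0.
  apply: contra_notN ntri => /eqP c3_0; apply: triangularizable3_upper.
  by apply: forall_ord3; rewrite ?A1 ?A2 ?A3 upper_tri_mx2 ?c3_0.
have b2_neq0 : b2 != 0.
  apply: contra_notN ntri => /eqP b2_0; apply: triangularizable3_lower.
  by apply: forall_ord3; rewrite ?A1 ?A2 ?A3 is_trig_mx2 ?b2_0.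
exists a, d, a2, b2, d2, a3, c3, d3; split.
  exists 1%:M; rewrite unitmx1 invmx1; split=> //.
  by apply: forall_ord3; rewrite mul1mx mulmx1.
have bc_neq0 : b2 * c3 != 0 by rewrite mulf_neq0.
split; last by rewrite -mulrA mulf_neq0 // subr_eq0.
move: s23; rewrite sigmaE A2 A3 sigmaM_upper_lower => /eqP.
by rewrite mulf_eq0 (negbTE bc_neq0) => /eqP.
Qed.

Lemma diag_upper_lower_form_diag A a d :
  A i1 = mx2 a 0 0 d -> a != d ->
  sigma A i1 i2 = 0 -> sigma A i1 i3 = 0 -> sigma A i2 i3 = 0 ->
  ~ triangularizable3 A -> diag_upper_lower_form A.
Proof.
move=> A1 ad; rewrite !sigmaE A1 => /(sigmaM_diag_eq0 ad) /orP[u2 | l2].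
  move=> /(sigmaM_diag_eq0 ad) /orP[u3 | l3] s23 ntri; last first.
    exact: diag_upper_lower_form_upper_lower A1 ad u2 l3 s23 ntri.
  by case: ntri; apply: triangularizable3_upper; apply: forall_ord3; rewrite ?A1 ?upper_tri_mx2 ?eqxx.
move=> /(sigmaM_diag_eq0 ad) /orP[u3 | l3] s23 ntri; last first.
  by case: ntri; apply: triangularizable3_lower; apply: forall_ord3; rewrite ?A1 ?is_trig_mx2 ?eqxx.
have sAS := similar3_conj3 A unitmx_swap.
apply: (diag_upper_lower_form_similar sAS).
apply: (@diag_upper_lower_form_upper_lower (conj3 swap_mx A) d a _ _ _ _ _ _).
- by rewrite /conj3 A1 mxconj_swap.
- by rewrite eq_sym.
- by rewrite /conj3 upper_tri_swap.
- by rewrite /conj3 is_trig_swap.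
- by rewrite (sigma_similar3 sAS).
- by move/(triangularizable3_similar sAS).
Qed.

Lemma triangularizable3_jordan A a b : A i1 = mx2 a b 0 a ->
  sigma A i1 i2 = 0 -> sigma A i1 i3 = 0 -> sigma A i2 i3 = 0 ->
  triangularizable3 A.
Proof.
rewrite !sigmaE => A1; have [b0 _ _ | b_neq0] := eqVneq b 0.
  case/sigmaM_eq0_cotriangular => P uP /andP[u2 u3].
  apply: (triangularizable3_conj uP); apply: forall_ord3; [|exact: u2|exact: u3].
  by rewrite A1 b0 mx2_scalar mxconj_scalar // -mx2_scalar upper_tri_mx2 eqxx.
rewrite A1 => /(sigmaM_jordan_eq0 b_neq0) u2 /(sigmaM_jordan_eq0 b_neq0) u3 _.
by apply: triangularizable3_upper; apply: forall_ord3; rewrite ?A1 ?upper_tri_mx2 ?eqxx.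
Qed.

End Triples.

Theorem lemma2p10 (R : realType) (A : V3 R) :
  sigma A i1 i2 = 0 -> sigma A i1 i3 = 0 -> sigma A i2 i3 = 0 ->
  ~ (exists B : V3 R, similar3 A B /\ upper_tri3 B) ->
  exists a1 d1 a2 b2 d2 a3 c3 d3 : R[i],
    similar3 A (triple (mx2 a1 0 0 d1) (mx2 a2 b2 0 d2) (mx2 a3 0 c3 d3)) /\
    (a2 - d2) * (a3 - d3) + b2 * c3 = 0 /\
    (a1 - d1) * b2 * c3 != 0.
Proof.
move=> s12 s13 s23 ntri.
have [P a d uP ad A1 | P a b uP A1] := mx2_normalP (A i1);
  have sAB := similar3_conj3 A uP; rewrite -!(sigma_similar3 sAB) in s12 s13 s23.
  apply: (diag_upper_lower_form_similar sAB).
  have ntriB : ~ triangularizable3 (conj3 P A) by move/(triangularizable3_similar sAB).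
  exact: diag_upper_lower_form_diag A1 ad s12 s13 s23 ntriB.
case: ntri; apply: (triangularizable3_similar sAB).
exact: triangularizable3_jordan A1 s12 s13 s23.
Qed.
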